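(* Let $\mathcal{G}$ be a finite graph with a join decomposition $\mathcal{G}=\mathcal{G}_1+\cdots+\mathcal{G}_k$. Then $$\mathfrak{K}_{\mathcal{G}}(x)=\prod_{j=1}^k\mathfrak{K}_{\mathcal{G}_j}(x|_{\mathcal{G}_j}),$$ and $$R(\mathcal{G})=R(\mathcal{G}_1)\times\cdots\times R(\mathcal{G}_k),$$ where for a graph $\mathcal{H}$ with vertex set $\mathcal{U}$, $R(\mathcal{H})=\{x\in[0,1]^{\mathcal{U}}:\mathfrak{K}_{\mathcal{H}'}(x|_{\mathcal{H}'})>0\text{ for every induced subgraph }\mathcal{H}'\subseteq\mathcal{H}\}$.
   Context: Graphs are finite, simple, undirected. A clique is a set of pairwise adjacent vertices (the empty set is a clique). An induced subgraph $\mathcal{H}'$ has vertex set $\mathcal{U}'\subseteq\mathcal{U}$ and all edges between vertices of $\mathcal{U}'$; $x|_{\mathcal{H}'}=(x_v)_{v\in\mathcal{U}'}$. $\mathfrak{K}_{\mathcal{H}}(x)=\sum_{\mathcal{K}\text{ clique}}(-1)^{|\mathcal{K}|}\prod_{v\in\mathcal{K}}x_v$, the empty clique contributing $1$. The graph join $\mathcal{G}_1+\cdots+\mathcal{G}_k$ has vertex set $\mathcal{V}_1\sqcup\cdots\sqcup\mathcal{V}_k$, two vertices being adjacent iff they are adjacent within the same $\mathcal{G}_i$ or lie in different $\mathcal{G}_i$'s. The identification $[0,1]^{\mathcal{V}}=\prod_j[0,1]^{\mathcal{V}_j}$ is used. *)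

From HB Require Import structures.
From mathcomp Require Import all_boot all_order all_algebra.
Set Implicit Arguments. Unset Strict Implicit. Unset Printing Implicit Defensive.
Import Order.TTheory GRing.Theory Num.Theory.
Local Open Scope ring_scope.

(* A finite simple graph: vertex type T : finType, symmetric irreflexive e : rel T. *)

Definition is_clique (T : finType) (e : rel T) (K : {set T}) : bool :=
  [forall u in K, forall v in K, (u != v) ==> e u v].

Definition Kpoly (R : comNzRingType) (T : finType) (e : rel T) (x : T -> R) : R :=
  \sum_(K : {set T} | is_clique e K) (-1) ^+ #|K| * \prod_(v in K) x v.

Definition subV (T : finType) (U : {set T}) : finType := {v : T | v \in U}.

Definition induced {T : finType} (e : rel T) (U : {set T}) : rel (subV U) :=
  fun a b => e (val a) (val b).
Arguments induced {T} e U.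

Definition restr {R : Type} {T : finType} (U : {set T}) (x : T -> R) : subV U -> R :=
  fun a => x (val a).
Arguments restr {R T} U x.

Definition inRegion (R : realFieldType) (T : finType) (e : rel T) (x : T -> R) : Prop :=
  (forall v, 0 <= x v <= 1) /\
  (forall U : {set T}, 0 < Kpoly (induced e U) (restr U x)).

Definition block (T : finType) (k : nat) (p : T -> 'I_k) (j : 'I_k) : {set T} :=
  [set v | p v == j].

From mathcomp Require Import all_boot all_order all_algebra.
Import Order.TTheory GRing.Theory Num.Theory.
Set Implicit Arguments. Unset Strict Implicit. Unset Printing Implicit Defensive.
Local Open Scope ring_scope.

(* In a join, a set of vertices is a clique exactly when its trace on every
   block is, so the cliques of G are the unions of one clique from each G_j and
   the clique sum factors over the blocks.  An induced subgraph of G is the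
   join of its traces on the blocks, so its clique sum is a product of clique
   sums of induced subgraphs of the G_j; positivity therefore transfers in both
   directions. *)

Definition Kpoly_on (R : comNzRingType) (T : finType) (e : rel T) (x : T -> R)
    (W : {set T}) : R :=
  \sum_(K : {set T} | (K \subset W) && is_clique e K) \prod_(v in K) - x v.

Lemma KpolyE (R : comNzRingType) (T : finType) (e : rel T) (x : T -> R) :
  Kpoly e x = Kpoly_on e x [set: T].
Proof.
rewrite /Kpoly /Kpoly_on; apply: eq_big => [K | K _]; first by rewrite subsetT.
by rewrite prodrN.
Qed.

Section Pullback.

Variables (S T : finType) (f : S -> T).
Hypothesis f_inj : injective f.

Lemma imset_subset_inj (A B : {set S}) : (f @: A \subset f @: B) = (A \subset B).
Proof.
apply/idP/idP => [/subsetP fAB | /(imsetS f)//].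
by apply/subsetP => a aA; rewrite -(mem_imset _ _ f_inj) fAB ?imset_f.
Qed.

Lemma imset_preimset (A : {set S}) (K : {set T}) :
  K \subset f @: A -> f @: (f @^-1: K) = K.
Proof.
move=> /subsetP KA; apply/setP => v; apply/imsetP/idP => [[a] | vK].
  by rewrite inE => aK ->.
by have /imsetP [a _ va] := KA v vK; exists a; rewrite // inE -va.
Qed.

Lemma is_clique_imset (e : rel T) (A : {set S}) :
  is_clique e (f @: A) = is_clique (fun a b => e (f a) (f b)) A.
Proof.
apply/forall_inP/forall_inP => cliqueA u uA; apply/forall_inP => v vA.
  by rewrite -(inj_eq f_inj); apply: (forall_inP (cliqueA _ (imset_f f uA))); rewrite imset_f.
case/imsetP: uA vA => a aA -> /imsetP [b bA ->]; rewrite (inj_eq f_inj).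
exact: (forall_inP (cliqueA a aA)).
Qed.

Lemma Kpoly_on_pullback (R : comNzRingType) (e : rel T) (x : T -> R)
    (A : {set S}) :
  Kpoly_on (fun a b => e (f a) (f b)) (fun a => x (f a)) A = Kpoly_on e x (f @: A).
Proof.
rewrite /Kpoly_on [RHS](reindex (fun K : {set S} => f @: K)); last first.
  exists (fun K : {set T} => f @^-1: K) => [K _ | K].
    by apply/setP => a; rewrite inE mem_imset.
  by rewrite inE => /andP [/imset_preimset].
apply: eq_big => [K | K _]; first by rewrite imset_subset_inj is_clique_imset.
by rewrite big_imset //; move=> a b _ _ /f_inj.
Qed.

End Pullback.

Lemma val_imsetT (T : finType) (W : {set T}) : val @: [set: subV W] = W.
Proof.
apply/setP => v; apply/imsetP/idP => [[a _ ->] | vW]; first exact: valP.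
by exists (exist _ v vW).
Qed.

Lemma Kpoly_induced (R : comNzRingType) (T : finType) (e : rel T) (x : T -> R)
    (W : {set T}) :
  Kpoly (induced e W) (restr W x) = Kpoly_on e x W.
Proof. by rewrite KpolyE (Kpoly_on_pullback val_inj) val_imsetT. Qed.

Section Join.

Variables (T : finType) (e : rel T) (k : nat) (p : T -> 'I_k).
Hypothesis join : forall u v : T, p u != p v -> e u v.

Lemma is_clique_join (K : {set T}) :
  is_clique e K = [forall j, is_clique e (K :&: block p j)].
Proof.
apply/idP/forallP => [cliqueK j | cliqueKj].
  apply/forall_inP => u /setIP [uK _]; apply/forall_inP => v /setIP [vK _].
  exact: (forall_inP (forall_inP cliqueK u uK)).
apply/forall_inP => u uK; apply/forall_inP => v vK; apply/implyP => neq_uv.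
have [puv | /join//] := eqVneq (p u) (p v).
have in_Kpu w : w \in K -> p w = p u -> w \in K :&: block p (p u).
  by move=> wK pw; rewrite !inE wK pw eqxx.
have := forall_inP (forall_inP (cliqueKj (p u)) u (in_Kpu u uK erefl)) v.
by rewrite in_Kpu // neq_uv; apply.
Qed.

Lemma bigcup_setI_block (F : 'I_k -> {set T}) (j : 'I_k) :
  (forall i, F i \subset block p i) -> (\bigcup_i F i) :&: block p j = F j.
Proof.
move=> Fp; apply/setP => v; rewrite inE; apply/andP/idP => [[/bigcupP [i _ vFi]] | vFj].
  by have := subsetP (Fp i) v vFi; rewrite !inE => /eqP -> /eqP <-.
by split; [apply/bigcupP; exists j | apply: (subsetP (Fp j))].
Qed.

Lemma subset_blockwise (A B : {set T}) :
  (A \subset B) = [forall j, A :&: block p j \subset B :&: block p j].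
Proof.
apply/idP/forallP => [AB j | ABj]; first exact: setSI.
apply/subsetP => v vA.
by have /subsetP/(_ v) := ABj (p v); rewrite !inE vA eqxx => /(_ isT) /andP [].
Qed.

Lemma Kpoly_on_join (R : comNzRingType) (x : T -> R) (W : {set T}) :
  Kpoly_on e x W = \prod_(j < k) Kpoly_on e x (W :&: block p j).
Proof.
rewrite /Kpoly_on.
pose Q j := [pred K : {set T} | (K \subset W :&: block p j) && is_clique e K].
rewrite (bigA_distr_big_dep Q (fun _ K => \prod_(v in K) - x v)).
rewrite (reindex (fun K : {set T} => [ffun j => K :&: block p j])); last first.
  exists (fun F : {ffun 'I_k -> {set T}} => \bigcup_j F j) => [K _ | F].
    apply/setP => v; apply/bigcupP/idP => [[j _] | vK]; first by rewrite ffunE inE => /andP [].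
    by exists (p v); rewrite // ffunE !inE vK /=.
  rewrite inE => /familyP FQ; apply/ffunP => j; rewrite ffunE bigcup_setI_block // => i.
  by have /andP [/subsetP FW _] := FQ i; apply/subsetP => v /FW /setIP [].
apply: eq_big => [K | K _].
  rewrite subset_blockwise is_clique_join.
  apply/andP/familyP => [[/forallP KW /forallP Kc] j | KQ]; first by rewrite ffunE inE KW Kc.
  by split; apply/forallP => j; have := KQ j; rewrite ffunE inE => /andP [].
rewrite (partition_big p predT) //; apply: eq_bigr => j _; rewrite ffunE.
by apply: eq_bigl => v; rewrite !inE.
Qed.

End Join.

Lemma inRegionE (R : realFieldType) (T : finType) (e : rel T) (x : T -> R) :
  inRegion e x <->
  (forall v, 0 <= x v <= 1) /\ (forall U : {set T}, 0 < Kpoly_on e x U).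
Proof.
by split=> -[x01 Kpos]; split=> // U; [rewrite -Kpoly_induced | rewrite Kpoly_induced].
Qed.

Lemma inRegion_induced (R : realFieldType) (T : finType) (e : rel T)
    (x : T -> R) (W : {set T}) :
  inRegion (induced e W) (restr W x) <->
  {in W, forall v, 0 <= x v <= 1} /\
  (forall U : {set T}, U \subset W -> 0 < Kpoly_on e x U).
Proof.
split=> [/inRegionE [x01 Kpos] | [x01 Kpos]]; [split | apply/inRegionE; split].
- by move=> v vW; apply: (x01 (exist _ v vW)).
- move=> U UW; have UvalT : U \subset val @: [set: subV W] by rewrite val_imsetT.
  by rewrite -(imset_preimset UvalT) -(Kpoly_on_pullback val_inj).
- by move=> a; apply/x01/valP.
- move=> V; rewrite (Kpoly_on_pullback val_inj); apply: Kpos.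
  by apply/subsetP => _ /imsetP [a _ ->]; apply: valP.
Qed.

Theorem lemma4p7 (R : realFieldType) (T : finType) (e : rel T)
  (e_sym : symmetric e) (e_irr : irreflexive e)
  (k : nat) (p : T -> 'I_k)
  (join : forall u v : T, p u != p v -> e u v) :
  (forall x : T -> R,
      Kpoly e x = \prod_(j < k) Kpoly (induced e (block p j)) (restr (block p j) x))
  /\
  (forall x : T -> R,
      inRegion e x <->
      (forall j : 'I_k, inRegion (induced e (block p j)) (restr (block p j) x))).
Proof.
split=> x.
  rewrite KpolyE (Kpoly_on_join join); apply: eq_bigr => j _.
  by rewrite Kpoly_induced setTI.
split=> [/inRegionE [x01 Kpos] j | region_blocks].
  by apply/inRegion_induced; split=> [v _ | U _]; [apply: x01 | apply: Kpos].
apply/inRegionE; split=> [v | U].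
  by have /inRegion_induced [x01 _] := region_blocks (p v); apply: x01; rewrite inE.
rewrite (Kpoly_on_join join); apply: prodr_gt0 => j _.
by have /inRegion_induced [_ Kpos] := region_blocks j; apply/Kpos/subsetIr.
Qed.
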